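(* Let $G=(V,E,W)$ be a finite connected weighted graph and let $\sigma$ be an inconsistent $d$-dimensional signature on $G$. Let $\rho$ denote the nullity of the connection Laplacian $\mathcal{L}^\sigma$. Then there exists a $(d-\rho)$-dimensional signature $\tau$ on $G$ such that $\mathcal{L}^\tau$ is invertible and $$\sigma\cong \Big(\bigoplus_{i=1}^{\rho}\iota^1\Big)\oplus\tau .$$
   Context: $G=(V,E,W)$: $V=\{1,\dots,n\}$, $E$ a set of undirected edges without loops or multiple edges, symmetric weights $w_{ij}>0$ iff $\{i,j\}\in E$, $\deg(i)=\sum_{j\sim i}w_{ij}$. The oriented edges are $E^{\mathrm{or}}=\{(i,j),(j,i):\{i,j\}\in E\}$. A $d$-dimensional signature is a map $\sigma:E^{\mathrm{or}}\to\mathsf{O}(d)$ with $\sigma_{ji}=\sigma_{ij}^{-1}=\sigma_{ij}^{\mathrm T}$. Its connection Laplacian $\mathcal{L}^\sigma$ is the $nd\times nd$ block matrix with $d\times d$ blocks $\mathcal{L}_{ii}=\deg(i)I_d$, $\mathcal{L}_{ij}=-w_{ij}\sigma_{ij}$ if $i\sim j$, and $0$ otherwise. $\sigma$ is consistent if the product of $\sigma$ along every directed cycle is $I_d$, and inconsistent otherwise. Two $d$-dimensional signatures satisfy $\sigma\cong\tau$ (switching equivalence) if there is $f:V\to\mathsf{O}(d)$ with $f(i)\sigma_{ij}=\tau_{ij}f(j)$ for all $(i,j)\in E^{\mathrm{or}}$. For a $d$-dimensional signature $\sigma$ and a $d'$-dimensional signature $\sigma'$, the direct sum is $(\sigma\oplus\sigma')_{ij}=\begin{bmatrix}\sigma_{ij}&0\\0&\sigma'_{ij}\end{bmatrix}$.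 $\iota^1$ denotes the $1$-dimensional signature identically equal to $1$. *)

From HB Require Import structures.
From mathcomp Require Import all_boot all_order all_algebra.
From mathcomp Require Import reals.
Set Implicit Arguments. Unset Strict Implicit. Unset Printing Implicit Defensive.
Import Order.TTheory GRing.Theory Num.Theory.
Local Open Scope ring_scope.

Definition weighted_graph (R : realType) (n : nat) (w : 'I_n -> 'I_n -> R) : Prop :=
  (forall i j, w i j = w j i) /\ (forall i, w i i = 0) /\ (forall i j, 0 <= w i j).

Definition adj (R : realType) (n : nat) (w : 'I_n -> 'I_n -> R) : rel 'I_n :=
  fun i j => 0 < w i j.

Definition connected_graph (R : realType) (n : nat) (w : 'I_n -> 'I_n -> R) : Prop :=
  forall i j : 'I_n, connect (adj w) i j.

Definition deg (R : realType) (n : nat) (w : 'I_n -> 'I_n -> R) (i : 'I_n) : R :=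
  \sum_(j < n) w i j.

Definition orthogonal_mx (R : realType) (d : nat) (M : 'M[R]_d) : Prop :=
  M *m M^T = 1%:M.

(* A d-dimensional signature: values on oriented edges (values on non-edges
   are irrelevant), in O(d), with sigma j i = (sigma i j)^T. *)
Definition signature (R : realType) (n d : nat) (w : 'I_n -> 'I_n -> R)
  (sigma : 'I_n -> 'I_n -> 'M[R]_d) : Prop :=
  forall i j, adj w i j -> orthogonal_mx (sigma i j) /\ sigma j i = (sigma i j)^T.

Definition conn_lap (R : realType) (n d : nat) (w : 'I_n -> 'I_n -> R)
  (sigma : 'I_n -> 'I_n -> 'M[R]_d) : 'M[R]_(\sum_(i < n) d) :=
  \mxblock_(i < n, j < n)
    (if i == j then (deg w i) *: (1%:M : 'M[R]_d) else - (w i j *: sigma i j)).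

Definition nullity (R : realType) (m : nat) (A : 'M[R]_m) : nat := (m - \rank A)%N.

(* Product of sigma along the directed cycle c = [v0; ...; v_{k-1}]:
   sigma_{v0 v1} sigma_{v1 v2} ... sigma_{v_{k-1} v0}. *)
Definition cycle_prod (R : realType) (n d : nat) (sigma : 'I_n -> 'I_n -> 'M[R]_d)
  (c : seq 'I_n) : 'M[R]_d :=
  foldr (fun p M => sigma p.1 p.2 *m M) 1%:M (zip c (rot 1 c)).

Definition directed_cycle (R : realType) (n : nat) (w : 'I_n -> 'I_n -> R)
  (c : seq 'I_n) : Prop :=
  (3 <= size c)%N /\ uniq c /\ cycle (adj w) c.

Definition consistent (R : realType) (n d : nat) (w : 'I_n -> 'I_n -> R)
  (sigma : 'I_n -> 'I_n -> 'M[R]_d) : Prop :=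
  forall c, directed_cycle w c -> cycle_prod sigma c = 1%:M.

Definition switching_equiv (R : realType) (n d : nat) (w : 'I_n -> 'I_n -> R)
  (sigma tau : 'I_n -> 'I_n -> 'M[R]_d) : Prop :=
  exists f : 'I_n -> 'M[R]_d,
    (forall i, orthogonal_mx (f i)) /\
    (forall i j, adj w i j -> f i *m sigma i j = tau i j *m f j).

Definition sig_dsum (R : realType) (n d1 d2 : nat)
  (s1 : 'I_n -> 'I_n -> 'M[R]_d1) (s2 : 'I_n -> 'I_n -> 'M[R]_d2)
  : 'I_n -> 'I_n -> 'M[R]_(d1 + d2) :=
  fun i j => block_mx (s1 i j) 0 0 (s2 i j).

Definition iota1 (R : realType) (n : nat) : 'I_n -> 'I_n -> 'M[R]_1 :=
  fun _ _ => 1%:M.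

Fixpoint iota_pow (R : realType) (n k : nat) : 'I_n -> 'I_n -> 'M[R]_k :=
  match k with
  | 0 => fun _ _ => 1%:M
  | k'.+1 => @sig_dsum R n 1 k' (@iota1 R n) (@iota_pow R n k')
  end.

From HB Require Import structures.
From mathcomp Require Import all_boot all_order all_algebra.
From mathcomp Require Import reals.
Set Implicit Arguments. Unset Strict Implicit. Unset Printing Implicit Defensive.
Import Order.TTheory GRing.Theory Num.Theory.
Local Open Scope ring_scope.

(* Write a row vector [u] of [R^(nd)] in blocks [u_i] of length [d]. Since
   [2 u L u^T = sum_{i,j} w_ij |u_i sigma_ij - u_j|^2], the kernel of the connection
   Laplacian [L] consists of the parallel sections, [u_i sigma_ij = u_j] on every edge,
   and on a connected graph such a section is determined by its value at one vertex
   [i0]. An orthonormal basis of these values at [i0] therefore transports along the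
   edges to orthonormal frames [X_i] of size [rho x d] with [X_i sigma_ij = X_j].
   Completing each [X_i] to an orthogonal matrix [F_i = (X_i; Y_i)] gives
   [F_i sigma_ij = diag(1, tau_ij) F_j] with [tau_ij = Y_i sigma_ij Y_j^T]. Finally a
   kernel vector [v] of [L^tau] lifts to the parallel section [v_i Y_i] of [L^sigma],
   whose value at [i0] is orthogonal to all values of kernel vectors there, hence zero;
   so [v = 0] and [L^tau] is invertible. *)

Section CastMul.
Variable R : pzSemiRingType.

Lemma mulmx_castmx m1 m1' m2 m2' m3 m3' (e1 : m1 = m1') (e2 : m2 = m2')
    (e3 : m3 = m3') (A : 'M[R]_(m1, m2)) (B : 'M[R]_(m2, m3)) :
  castmx (e1, e2) A *m castmx (e2, e3) B = castmx (e1, e3) (A *m B).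
Proof. by case: m1' / e1; case: m2' / e2; case: m3' / e3; rewrite !castmx_id. Qed.

Lemma castmx1 m m' (e : m = m') : castmx (e, e) (1%:M : 'M[R]_m) = 1%:M.
Proof. by case: m' / e; rewrite castmx_id. Qed.

End CastMul.

Section FrobeniusNorm.
Variable R : realFieldType.

Lemma mxtrace_mul_tr m k (M : 'M[R]_(m, k)) :
  \tr (M *m M^T) = \sum_a \sum_b M a b ^+ 2.
Proof.
apply: eq_bigr => a _; rewrite mxE; apply: eq_bigr => b _.
by rewrite mxE expr2.
Qed.

Lemma mxtrace_mul_tr_ge0 m k (M : 'M[R]_(m, k)) : 0 <= \tr (M *m M^T).
Proof.
rewrite mxtrace_mul_tr; apply: sumr_ge0 => a _; apply: sumr_ge0 => b _.
exact: sqr_ge0.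
Qed.

Lemma mxtrace_mul_tr_eq0 m k (M : 'M[R]_(m, k)) :
  (\tr (M *m M^T) == 0) = (M == 0).
Proof.
apply/idP/eqP => [|->]; last by rewrite mul0mx mxtrace0.
rewrite mxtrace_mul_tr psumr_eq0 => [/allP M0|a _]; last first.
  by apply: sumr_ge0 => b _; exact: sqr_ge0.
apply/matrixP => a b; move/(_ a (mem_index_enum a)): M0.
rewrite psumr_eq0 => [/allP|c _]; last exact: sqr_ge0.
move=> /(_ b (mem_index_enum b)).
by rewrite sqrf_eq0 mxE => /eqP.
Qed.

End FrobeniusNorm.

Section Orthonormal.
Variable R : rcfType.

Lemma orthonormal_rank r N (Q : 'M[R]_(r, N)) :
  Q *m Q^T = 1%:M -> \rank Q = r.
Proof.
move=> QQ; apply/eqP; rewrite eqn_leq rank_leq_row /=.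
by rewrite -{1}(mxrank1 R r) -QQ mxrankM_maxl.
Qed.

Lemma orthonormal_col_mx m1 m2 N (A : 'M[R]_(m1, N)) (B : 'M[R]_(m2, N)) :
  A *m A^T = 1%:M -> B *m B^T = 1%:M -> A *m B^T = 0 ->
  col_mx A B *m (col_mx A B)^T = 1%:M.
Proof.
move=> AA BB AB; rewrite tr_col_mx mul_col_row AA BB AB.
by rewrite -[B *m A^T]trmxK trmx_mul trmxK AB trmx0 -scalar_mx_block.
Qed.

(* [N] orthonormal rows in [R^N] form an orthogonal matrix, whose columns are
   then orthonormal too. *)
Lemma orthonormal_col_mx_resolution r k N (A : 'M[R]_(r, N)) (B : 'M[R]_(k, N)) :
  (r + k)%N = N -> col_mx A B *m (col_mx A B)^T = 1%:M ->
  A^T *m A + B^T *m B = 1%:M.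
Proof.
move=> e AB; pose F := castmx (e, erefl N) (col_mx A B).
have /mulmx1C : F *m F^T = 1%:M by rewrite trmx_cast mulmx_castmx AB castmx1.
by rewrite trmx_cast mulmx_castmx castmx_id tr_col_mx mul_row_col.
Qed.

Lemma normalize_row N (v : 'rV[R]_N) :
  v != 0 -> exists2 u : 'rV[R]_N, u *m u^T = 1%:M & (u <= v)%MS.
Proof.
move=> v_neq0; set s := \tr (v *m v^T).
have s_gt0 : 0 < s by rewrite lt_def mxtrace_mul_tr_eq0 v_neq0 mxtrace_mul_tr_ge0.
have vv : v *m v^T = s%:M.
  by apply/rowP => a; rewrite !ord1 /s /mxtrace big_ord1 !mxE eqxx mulr1n.
exists ((Num.sqrt s)^-1 *: v); last exact: scalemx_sub.
rewrite linearZ /= -scalemxAl -scalemxAr scalerA vv scale_scalar_mx.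
by rewrite -invfM -expr2 sqr_sqrtr ?ltW // mulVf ?lt0r_neq0.
Qed.

Lemma orthonormal_step p r N (U : 'M[R]_(p, N)) (Q : 'M[R]_(r, N)) :
  Q *m Q^T = 1%:M -> (Q <= U)%MS -> (r < \rank U)%N ->
  exists u : 'rV[R]_N, [/\ u *m u^T = 1%:M, Q *m u^T = 0 & (u <= U)%MS].
Proof.
move=> QQ QU rU.
have [x xU xQ] : exists2 x : 'rV[R]_N, (x <= U)%MS & ~~ (x <= Q)%MS.
  have : ~~ (U <= Q)%MS.
    by apply: contraL rU => /mxrankS; rewrite (orthonormal_rank QQ) -leqNgt.
  by case/row_subPn => i UiQ; exists (row i U); rewrite ?row_sub.
(* [x *m Q^T *m Q] is the orthogonal projection of [x] on the rows of [Q]. *)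
set v := x - x *m Q^T *m Q.
have vU : (v <= U)%MS by rewrite addmx_sub // eqmx_opp mulmx_sub.
have Qv : Q *m v^T = 0.
  by rewrite linearB /= !trmx_mul trmxK mulmxBr (mulmxA Q) QQ mul1mx subrr.
have v_neq0 : v != 0.
  by apply: contra xQ; rewrite subr_eq0 => /eqP ->; exact: submxMl.
have [u uu uv] := normalize_row v_neq0.
exists u; split=> //; last exact: submx_trans uv vU.
by have [c ->] := submxP uv; rewrite trmx_mul mulmxA Qv mul0mx.
Qed.

Lemma orthonormal_extension p N (U : 'M[R]_(p, N)) k :
  forall r (Q : 'M[R]_(r, N)), Q *m Q^T = 1%:M -> (Q <= U)%MS ->
  (r + k <= \rank U)%N ->
  exists Q' : 'M[R]_(k, N), [/\ Q' *m Q'^T = 1%:M, Q *m Q'^T = 0 & (Q' <= U)%MS].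
Proof.
elim: k => [|k IHk] r Q QQ QU rU.
  exists 0; split; [by apply/matrixP => -[] | by rewrite thinmx0 | exact: sub0mx].
have r_lt : (r < \rank U)%N by apply: leq_trans rU; rewrite addnS ltnS leq_addr.
have [u [uu Qu uU]] := orthonormal_step QQ QU r_lt.
have [||Q' [Q'Q' QuQ' Q'U]] := IHk _ (col_mx Q u) (orthonormal_col_mx QQ uu Qu).
- by rewrite col_mx_sub QU.
- by rewrite addn1 addSnnS.
move: QuQ'; rewrite mul_col_mx => /eqP; rewrite col_mx_eq0 => /andP[/eqP QQ' /eqP uQ'].
exists (col_mx u Q'); split; first exact: (orthonormal_col_mx uu Q'Q' uQ').
  (* The [col_mx] lemmas only rewrite at the type ['M_(1 + k, N)], not ['M_(k.+1, N)]. *)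
  have QuQ' : Q *m (col_mx u Q')^T = 0 by rewrite tr_col_mx mul_mx_row Qu QQ' row_mx0.
  exact: QuQ'.
have uQ'U : (col_mx u Q' <= U)%MS by rewrite col_mx_sub uU.
exact: uQ'U.
Qed.

Lemma orthonormal_basis p N (U : 'M[R]_(p, N)) k :
  \rank U = k -> exists Q : 'M[R]_(k, N), Q *m Q^T = 1%:M /\ (Q == U)%MS.
Proof.
move=> rU; have [|||Q [QQ _ QU]] := @orthonormal_extension p N U k 0 0.
- by apply/matrixP => -[].
- exact: sub0mx.
- by rewrite rU.
exists Q; split=> //; rewrite -mxrank_leqif_eq //.
by rewrite (orthonormal_rank QQ) rU.
Qed.

Lemma orthonormal_completion r k N (X : 'M[R]_(r, N)) :
  X *m X^T = 1%:M -> (r + k <= N)%N ->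
  exists Y : 'M[R]_(k, N), Y *m Y^T = 1%:M /\ X *m Y^T = 0.
Proof.
move=> XX rk; have [|Y [YY XY _]] := orthonormal_extension (k := k) XX (submx1 X).
  by rewrite mxrank1.
by exists Y.
Qed.

End Orthonormal.

(* The contributions of the oriented edges [(i,j)] and [(j,i)] to [u L u^T]. *)
Lemma edge_energy_identity (R : comPzRingType) m d (s : 'M[R]_d)
    (a b : 'M[R]_(m, d)) : s *m s^T = 1%:M ->
  (b - a *m s) *m b^T + (a - b *m s^T) *m a^T = (a *m s - b) *m (a *m s - b)^T.
Proof.
move=> ss; rewrite linearB /= trmx_mul !mulmxBl !mulmxBr -!mulmxA (mulmxA s) ss mul1mx.
by rewrite opprB addrACA [RHS]addrACA [in RHS](addrC (a *m a^T)).
Qed.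

Section VertexBlocks.
Variables (R : pzSemiRingType) (n : nat).

Definition vblock d m (u : 'M[R]_(m, \sum_(i < n) d)) (i : 'I_n) : 'M[R]_(m, d) :=
  @submxrow _ n (fun=> d) m u i.

Lemma vblock_mxrow d m (F : 'I_n -> 'M[R]_(m, d)) i : vblock (\mxrow_j F j) i = F i.
Proof. exact: mxrowK. Qed.

Lemma vblock_mul d m p (A : 'M[R]_(m, p)) (u : 'M[R]_(p, \sum_(i < n) d)) i :
  vblock (A *m u) i = A *m vblock u i.
Proof. by rewrite /vblock mul_submxrow. Qed.

Lemma vblockE d m (u : 'M[R]_(m, \sum_(i < n) d)) i :
  vblock u i = u *m vblock 1%:M i.
Proof. by rewrite -vblock_mul mulmx1. Qed.

Lemma vblock_eq0 d m (u : 'M[R]_(m, \sum_(i < n) d)) :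
  (forall i, vblock u i = 0) -> u = 0.
Proof.
move=> u0; rewrite -(submxrowK u) -(mxrow0 (q_ := fun=> d)).
exact: eq_mxrow.
Qed.

End VertexBlocks.

Section ConnectionLaplacian.
Variables (R : realType) (n : nat) (w : 'I_n -> 'I_n -> R).
Hypothesis wg : weighted_graph w.

Lemma weight_eq0 i j : ~~ adj w i j -> w i j = 0.
Proof.
case: wg => _ [_ w_ge0]; rewrite /adj lt_def => /nandP[/negbNE/eqP //|].
by rewrite w_ge0.
Qed.

Lemma conn_lap_mulE d (sigma : 'I_n -> 'I_n -> 'M[R]_d) m
    (u : 'M[R]_(m, \sum_(i < n) d)) :
  u *m conn_lap w sigma =
  \mxrow_j \sum_i w i j *: (vblock u j - vblock u i *m sigma i j).
Proof.
rewrite /conn_lap -{1}(submxrowK u) mul_mxrow_mxblock; apply: eq_mxrow => j.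
case: wg => w_sym [w_diag _].
rewrite (bigD1 j) //= eqxx [RHS](bigD1 j) //= w_diag scale0r add0r.
rewrite -scalemxAr mulmx1 /deg scaler_suml (bigD1 j) //= w_diag scale0r add0r.
rewrite -big_split; apply: eq_bigr => i /negbTE ij /=.
by rewrite ij mulmxN -scalemxAr w_sym scalerBr.
Qed.

Lemma conn_lap_form d (sigma : 'I_n -> 'I_n -> 'M[R]_d) m
    (u : 'M[R]_(m, \sum_(i < n) d)) : signature w sigma ->
  (u *m conn_lap w sigma *m u^T) *+ 2 =
  \sum_i \sum_j w i j *: ((vblock u i *m sigma i j - vblock u j)
                          *m (vblock u i *m sigma i j - vblock u j)^T).
Proof.
move=> sg.
have uLu : u *m conn_lap w sigma *m u^T = \sum_j \sum_i
    w i j *: ((vblock u j - vblock u i *m sigma i j) *m (vblock u j)^T).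
  rewrite conn_lap_mulE -[u in u^T](submxrowK (q_ := fun=> d)) tr_mxrow.
  rewrite mul_mxrow_mxcol; apply: eq_bigr => j _.
  by rewrite mulmx_suml; apply: eq_bigr => i _; rewrite scalemxAl.
rewrite mulr2n {1}uLu exchange_big uLu -big_split; apply: eq_bigr => i _ /=.
rewrite -big_split; apply: eq_bigr => j _ /=.
case: wg => w_sym _; rewrite (w_sym j i).
have [ij | nij] := boolP (adj w i j); last by rewrite weight_eq0 // !scale0r addr0.
have [ss ->] := sg i j ij.
by rewrite -scalerDr edge_energy_identity.
Qed.

Lemma conn_lap_kerP d (sigma : 'I_n -> 'I_n -> 'M[R]_d) m
    (u : 'M[R]_(m, \sum_(i < n) d)) : signature w sigma ->
  u *m conn_lap w sigma = 0 <->
  (forall i j, adj w i j -> vblock u i *m sigma i j = vblock u j).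
Proof.
move=> sg; split => [uL i j ij | parallel].
  set D := fun i j => vblock u i *m sigma i j - vblock u j.
  have D_ge0 i' j' : 0 <= w i' j' * \tr (D i' j' *m (D i' j')^T).
    by case: wg => _ [_ w_ge0]; rewrite mulr_ge0 ?mxtrace_mul_tr_ge0.
  have : \tr (\sum_i \sum_j w i j *: (D i j *m (D i j)^T)) = 0.
    by rewrite -conn_lap_form // uL mul0mx mul0rn mxtrace0.
  rewrite raddf_sum; under eq_bigr do rewrite raddf_sum /=.
  under eq_bigr do under eq_bigr do rewrite mxtraceZ.
  move/eqP; rewrite psumr_eq0 => [/allP/(_ i (mem_index_enum i))|i' _]; last first.
    exact: sumr_ge0.
  rewrite psumr_eq0 // => /allP/(_ j (mem_index_enum j)).
  rewrite mulf_eq0 gt_eqF //= mxtrace_mul_tr_eq0 subr_eq0.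
  by move/eqP.
rewrite conn_lap_mulE -(mxrow0 (q_ := fun=> d)); apply: eq_mxrow => j.
apply: big1 => i _; have [ij | nij] := boolP (adj w i j).
  by rewrite parallel // subrr scaler0.
by rewrite weight_eq0 // scale0r.
Qed.

Hypothesis wc : connected_graph w.

Lemma connected_ind (i0 : 'I_n) (P : 'I_n -> Prop) :
  P i0 -> (forall i j, adj w i j -> P i -> P j) -> forall i, P i.
Proof.
move=> P0 P_adj i; have /connectP[p p_path ->] := wc i0 i.
by elim: p i0 p_path P0 => //= k p IHp j /andP[jk /IHp Pk] /(P_adj _ _ jk).
Qed.

Lemma conn_lap_ker_eq0 d (sigma : 'I_n -> 'I_n -> 'M[R]_d) m
    (u : 'M[R]_(m, \sum_(i < n) d)) (i0 : 'I_n) :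
  signature w sigma -> u *m conn_lap w sigma = 0 -> vblock u i0 = 0 -> u = 0.
Proof.
move=> sg /(conn_lap_kerP _ sg) parallel u0; apply: vblock_eq0.
by apply: (connected_ind u0) => i j ij ui0; rewrite -(parallel i j ij) ui0 mul0mx.
Qed.

End ConnectionLaplacian.

Section SignatureSplitting.
Variables (R : realType) (n d : nat) (w : 'I_n -> 'I_n -> R).
Variable sigma : 'I_n -> 'I_n -> 'M[R]_d.
Hypotheses (wg : weighted_graph w) (wc : connected_graph w).
Hypothesis sg : signature w sigma.
Variable i0 : 'I_n.

Local Notation L := (conn_lap w sigma).

Lemma conn_lap_ker_orthonormal m (u : 'M[R]_(m, \sum_(i < n) d)) :
  u *m L = 0 -> vblock u i0 *m (vblock u i0)^T = 1%:M ->
  forall i, vblock u i *m (vblock u i)^T = 1%:M.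
Proof.
move=> /(conn_lap_kerP wg _ sg) parallel u0; apply: (connected_ind wc u0).
move=> i j ij uu; have [ss _] := sg ij.
by rewrite -(parallel i j ij) trmx_mul mulmxA -(mulmxA (vblock u i)) ss mulmx1.
Qed.

Lemma rank_ker_vblock : \rank (kermx L *m vblock 1%:M i0) = nullity L.
Proof.
rewrite /nullity -mxrank_ker -(mxrank_mul_ker _ (vblock 1%:M i0)).
suff -> : (kermx L :&: kermx (vblock 1%:M i0))%MS = 0 by rewrite mxrank0 addn0.
apply: (conn_lap_ker_eq0 wg wc (i0 := i0) sg); first exact/sub_kermxP/capmxSl.
by rewrite vblockE; apply/sub_kermxP; exact: capmxSr.
Qed.

Lemma kernel_frame : exists X : 'I_n -> 'M[R]_(nullity L, d),
  [/\ forall i, X i *m (X i)^T = 1%:M,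
      forall i j, adj w i j -> X i *m sigma i j = X j
    & forall m (u : 'M[R]_(m, \sum_(i < n) d)),
        u *m L = 0 -> (vblock u i0 <= X i0)%MS].
Proof.
set U := kermx L *m vblock 1%:M i0.
have [Q [QQ /andP[QU UQ]]] := orthonormal_basis rank_ker_vblock.
(* Lift the rows of [Q], values at [i0] of kernel vectors, back to the kernel. *)
set Xf := Q *m pinvmx U *m kermx L.
have XfL : Xf *m L = 0 by rewrite -mulmxA mulmx_ker mulmx0.
have Xf0 : vblock Xf i0 = Q by rewrite vblockE -mulmxA mulmxKpV.
exists (vblock Xf); split.
- by apply: conn_lap_ker_orthonormal XfL _; rewrite Xf0.
- exact/(conn_lap_kerP wg _ sg).
move=> m u uL; rewrite Xf0 vblockE; apply: submx_trans UQ.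
exact/submxMr/sub_kermxP.
Qed.

Variables (r k : nat) (X : 'I_n -> 'M[R]_(r, d)) (Y : 'I_n -> 'M[R]_(k, d)).
Hypothesis dim_split : (r + k)%N = d.
Hypotheses (XX : forall i, X i *m (X i)^T = 1%:M) (YY : forall i, Y i *m (Y i)^T = 1%:M).
Hypothesis XY : forall i, X i *m (Y i)^T = 0.
Hypothesis X_parallel : forall i j, adj w i j -> X i *m sigma i j = X j.

Definition compl_sig : 'I_n -> 'I_n -> 'M[R]_k :=
  fun i j => Y i *m sigma i j *m (Y j)^T.

Lemma compl_frame_orthogonal i : Y i *m (X i)^T = 0.
Proof. by rewrite -[Y i]trmxK -trmx_mul XY trmx0. Qed.

Lemma compl_sig_parallel i j : adj w i j -> Y i *m sigma i j = compl_sig i j *m Y j.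
Proof.
move=> ij; have [ss _] := sg ij.
have YsX : Y i *m sigma i j *m (X j)^T = 0.
  by rewrite -(X_parallel ij) trmx_mul mulmxA -(mulmxA (Y i)) ss mulmx1
    compl_frame_orthogonal.
have resolution := orthonormal_col_mx_resolution dim_split
  (orthonormal_col_mx (XX j) (YY j) (XY j)).
by rewrite -[LHS]mulmx1 -resolution mulmxDr !mulmxA YsX mul0mx add0r.
Qed.

Lemma compl_sig_signature : signature w compl_sig.
Proof.
move=> i j ij; have [ss sji] := sg ij; split.
  have : (compl_sig i j *m Y j) *m (compl_sig i j *m Y j)^T = 1%:M.
    by rewrite -compl_sig_parallel // trmx_mul mulmxA -(mulmxA (Y i)) ss mulmx1 YY.
  by rewrite trmx_mul mulmxA -(mulmxA _ (Y j)) YY mulmx1.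
by rewrite /compl_sig sji !trmx_mul trmxK mulmxA.
Qed.

Lemma compl_sig_switching i j : adj w i j ->
  col_mx (X i) (Y i) *m sigma i j =
  block_mx 1%:M 0 0 (compl_sig i j) *m col_mx (X j) (Y j).
Proof.
move=> ij; rewrite mul_col_mx mul_block_col !mul1mx !mul0mx addr0 add0r.
by rewrite X_parallel // compl_sig_parallel.
Qed.

Lemma compl_conn_lap_unit :
  (forall m (u : 'M[R]_(m, \sum_(i < n) d)), u *m L = 0 -> (vblock u i0 <= X i0)%MS) ->
  conn_lap w compl_sig \in unitmx.
Proof.
move=> X_span; rewrite -row_free_unit -kermx_eq0; apply/eqP.
set v := kermx _; have vL : v *m conn_lap w compl_sig = 0 := mulmx_ker _.
pose u : 'M[R]_(_, \sum_(i < n) d) := \mxrow_i (vblock v i *m Y i).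
have uL : u *m L = 0.
  apply/(conn_lap_kerP wg _ sg) => i j ij; rewrite !vblock_mxrow -mulmxA.
  rewrite compl_sig_parallel // mulmxA.
  by rewrite (proj1 (conn_lap_kerP wg _ compl_sig_signature) vL i j ij).
have u0 : vblock u i0 = 0.
  have [c uc] := submxP (X_span _ _ uL).
  have c0 : c = 0.
    have := congr1 (mulmx^~ (X i0)^T) uc.
    rewrite /= -mulmxA XX mulmx1 vblock_mxrow -mulmxA compl_frame_orthogonal.
    by rewrite mulmx0.
  by rewrite uc c0 mul0mx.
apply: vblock_eq0 => i.
have /(congr1 (fun M => vblock M i)) := conn_lap_ker_eq0 wg wc sg uL u0.
rewrite vblock_mxrow /vblock submxrow0 => vY0.
by rewrite -[submxrow v i]mulmx1 -(YY i) mulmxA vY0 mul0mx.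
Qed.

End SignatureSplitting.

Lemma iota_pow_id (R : realType) n k i j : @iota_pow R n k i j = 1%:M.
Proof.
by elim: k => //= k IHk; rewrite /sig_dsum IHk /iota1 -scalar_mx_block.
Qed.

Lemma inconsistent_gt0 (R : realType) n d (w : 'I_n -> 'I_n -> R)
    (sigma : 'I_n -> 'I_n -> 'M[R]_d) :
  ~ consistent w sigma -> (0 < n)%N.
Proof. by case: n w sigma => // w sigma; case=> -[|[]]. Qed.

Theorem theorem2p9 (R : realType) (n d : nat) (w : 'I_n -> 'I_n -> R)
  (sigma : 'I_n -> 'I_n -> 'M[R]_d) :
  weighted_graph w -> connected_graph w ->
  signature w sigma -> ~ consistent w sigma ->
  let rho := nullity (conn_lap w sigma) in
  exists (d' : nat) (e : (rho + d')%N = d) (tau : 'I_n -> 'I_n -> 'M[R]_d'),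
    d' = (d - rho)%N /\
    signature w tau /\
    conn_lap w tau \in unitmx /\
    switching_equiv w sigma
      (fun i j => castmx (e, e) (sig_dsum (@iota_pow R n rho) tau i j)).
Proof.
(* Inconsistency is only needed to make the graph nonempty. *)
move=> wg wc sg /inconsistent_gt0 n_gt0 rho; pose i0 := Ordinal n_gt0.
have [X [XX X_parallel X_span]] := kernel_frame wg wc sg i0.
have rho_le_d : (rho <= d)%N by rewrite /rho -(orthonormal_rank (XX i0)) rank_leq_col.
have e : (rho + (d - rho))%N = d by rewrite subnKC.
have [Y YY_XY] := fin_all_exists (fun i => orthonormal_completion (XX i) (eq_leq e)).
have YY i := (YY_XY i).1; have XY i := (YY_XY i).2.
exists (d - rho)%N, e, (compl_sig sigma Y); split=> //; split.
  exact: compl_sig_signature e XX YY XY X_parallel.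
split; first exact: compl_conn_lap_unit e XX YY XY X_parallel X_span.
exists (fun i => castmx (e, erefl d) (col_mx (X i) (Y i))); split.
  by move=> i; rewrite /orthogonal_mx trmx_cast mulmx_castmx orthonormal_col_mx ?castmx1.
move=> i j ij; rewrite /sig_dsum iota_pow_id mulmx_castmx.
rewrite -[sigma i j](castmx_id (erefl d, erefl d)) mulmx_castmx.
by rewrite (compl_sig_switching sg e XX YY XY X_parallel).
Qed.
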